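(* Let $\Delta=\{D_1,\dots,D_7\}$ and $\Sigma=\{\sigma_1,\dots,\sigma_5\}\subset\mathbb Z\Delta$ with $\sigma_1=D_1+D_2-D_3-D_7$, $\sigma_2=-D_1+D_2+D_3-D_4-D_6$, $\sigma_3=-D_2+D_3+D_4-D_5$, $\sigma_4=-D_3+D_4+D_5$, $\sigma_5=-D_5+D_6$. Then $D_4$ is minuscule in $\mathbb N\Delta$ (i.e. $E\in\mathbb N\Delta$, $E\le_\Sigma D_4$ implies $E=D_4$), and $$\Gamma_{D_4}=\langle D_1,\ D_2,\ D_4,\ D_3+D_7,\ D_5+D_7,\ D_6+D_7\rangle_{\mathbb N}.$$
   Context: For $D,E\in\mathbb Z\Delta$ write $D\le_\Sigma E$ if $E-D\in\mathbb N\Sigma$. For $D\in\mathbb N\Delta$, $\Gamma_D=\bigcup_{n\in\mathbb N}\{E\in\mathbb N\Delta: E\le_\Sigma nD\}$, a subsemigroup of $\mathbb N\Delta$; $\langle\cdot\rangle_{\mathbb N}$ denotes the generated submonoid. *)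

From Stdlib Require Import ZArith List.
Import ListNotations.
Open Scope Z_scope.

(* An element of Z Delta: its coordinates on D_1, ..., D_7. *)
Record V := mkV { c1 : Z; c2 : Z; c3 : Z; c4 : Z; c5 : Z; c6 : Z; c7 : Z }.

Definition vadd (x y : V) : V :=
  mkV (c1 x + c1 y) (c2 x + c2 y) (c3 x + c3 y) (c4 x + c4 y)
      (c5 x + c5 y) (c6 x + c6 y) (c7 x + c7 y).
Definition vsub (x y : V) : V :=
  mkV (c1 x - c1 y) (c2 x - c2 y) (c3 x - c3 y) (c4 x - c4 y)
      (c5 x - c5 y) (c6 x - c6 y) (c7 x - c7 y).
Definition vscale (n : nat) (x : V) : V :=
  let k := Z.of_nat n in
  mkV (k * c1 x) (k * c2 x) (k * c3 x) (k * c4 x) (k * c5 x) (k * c6 x) (k * c7 x).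
Definition vzero : V := mkV 0 0 0 0 0 0 0.

Definition D1 := mkV 1 0 0 0 0 0 0.
Definition D2 := mkV 0 1 0 0 0 0 0.
Definition D3 := mkV 0 0 1 0 0 0 0.
Definition D4 := mkV 0 0 0 1 0 0 0.
Definition D5 := mkV 0 0 0 0 1 0 0.
Definition D6 := mkV 0 0 0 0 0 1 0.
Definition D7 := mkV 0 0 0 0 0 0 1.

Definition sigma1 := mkV 1 1 (-1) 0 0 0 (-1).
Definition sigma2 := mkV (-1) 1 1 (-1) 0 (-1) 0.
Definition sigma3 := mkV 0 (-1) 1 1 (-1) 0 0.
Definition sigma4 := mkV 0 0 (-1) 1 1 0 0.
Definition sigma5 := mkV 0 0 0 0 (-1) 1 0.

Definition NDelta (x : V) : Prop :=
  0 <= c1 x /\ 0 <= c2 x /\ 0 <= c3 x /\ 0 <= c4 x /\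
  0 <= c5 x /\ 0 <= c6 x /\ 0 <= c7 x.

Definition NSigma (x : V) : Prop :=
  exists n1 n2 n3 n4 n5 : nat,
    x = vadd (vscale n1 sigma1) (vadd (vscale n2 sigma2) (vadd (vscale n3 sigma3)
          (vadd (vscale n4 sigma4) (vscale n5 sigma5)))).

Definition leSigma (D E : V) : Prop := NSigma (vsub E D).

Definition Gamma (D : V) (E : V) : Prop :=
  NDelta E /\ exists n : nat, leSigma E (vscale n D).

Definition minuscule (D : V) : Prop :=
  forall E, NDelta E -> leSigma E D -> E = D.

Inductive InMonoid (gs : list V) : V -> Prop :=
  | InMonoid_zero : InMonoid gs vzero
  | InMonoid_add : forall x g, InMonoid gs x -> In g gs -> InMonoid gs (vadd x g).

(* Every sigma_i lies in the kernel of the functional c3 + c5 + c6 - c7, and so does D4;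
   hence Gamma_{D4} lies in the cone of nonnegative vectors with c7 = c3 + c5 + c6, which is
   exactly the monoid generated by D1, D2, D4, D3+D7, D5+D7, D6+D7.  Conversely every such
   vector E satisfies E <=_Sigma n D4 for an explicit n, obtained by solving the triangular
   system for the coefficients of the sigma_i.  Minuscularity of D4 is a direct inspection of
   the same system with n = 1. *)
From Stdlib Require Import ZArith List Lia.
Import ListNotations.

Definition balanced (x : V) : Prop := c7 x = c3 x + c5 x + c6 x.

Lemma V_ext (x y : V) :
  c1 x = c1 y -> c2 x = c2 y -> c3 x = c3 y -> c4 x = c4 y ->
  c5 x = c5 y -> c6 x = c6 y -> c7 x = c7 y -> x = y.
Proof. destruct x, y; cbn; intros; f_equal; assumption. Qed.

(* Computes coordinates under the projections only: unfolding [vadd] at the head of a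
   nested sum would copy each summand seven times per level. *)
Ltac simpl_coords :=
  unfold NDelta, balanced in *;
  cbn [c1 c2 c3 c4 c5 c6 c7 vadd vsub vscale vzero D1 D2 D3 D4 D5 D6 D7
       sigma1 sigma2 sigma3 sigma4 sigma5] in *.

Lemma NSigma_coords (x : V) :
  NSigma x <->
  exists n1 n2 n3 n4 n5 : nat,
    c1 x = Z.of_nat n1 - Z.of_nat n2 /\
    c2 x = Z.of_nat n1 + Z.of_nat n2 - Z.of_nat n3 /\
    c3 x = - Z.of_nat n1 + Z.of_nat n2 + Z.of_nat n3 - Z.of_nat n4 /\
    c4 x = - Z.of_nat n2 + Z.of_nat n3 + Z.of_nat n4 /\
    c5 x = - Z.of_nat n3 + Z.of_nat n4 - Z.of_nat n5 /\
    c6 x = - Z.of_nat n2 + Z.of_nat n5 /\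
    c7 x = - Z.of_nat n1.
Proof.
  split.
  - intros (n1 & n2 & n3 & n4 & n5 & ->).
    exists n1, n2, n3, n4, n5; simpl_coords; lia.
  - intros (n1 & n2 & n3 & n4 & n5 & H).
    exists n1, n2, n3, n4, n5.
    apply V_ext; simpl_coords; lia.
Qed.

Lemma NSigma_balanced (x : V) : NSigma x -> balanced x.
Proof.
  intros (n1 & n2 & n3 & n4 & n5 & H)%NSigma_coords.
  unfold balanced; lia.
Qed.

Lemma minuscule_D4 : minuscule D4.
Proof.
  intros E HE (n1 & n2 & n3 & n4 & n5 & H)%NSigma_coords.
  apply V_ext; simpl_coords; lia.
Qed.

Lemma Gamma_D4_iff (E : V) : Gamma D4 E <-> NDelta E /\ balanced E.
Proof.
  split.
  - intros [HE [n Hle%NSigma_balanced]].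
    split; [exact HE |].
    simpl_coords; lia.
  - intros [HE Hbal].
    split; [exact HE |].
    destruct E as [a b c d e f g]; simpl_coords.
    (* the coefficients are read off c7, c1, c2, c6, c5 in turn and n from c4;
       they are nonnegative because g = c + e + f >= e + f. *)
    exists (Z.to_nat (d + 2 * a + 2 * b + 4 * g - e - f)).
    apply NSigma_coords.
    exists (Z.to_nat g), (Z.to_nat (a + g)), (Z.to_nat (a + b + 2 * g)),
      (Z.to_nat (2 * a + b + 3 * g - e - f)), (Z.to_nat (a + g - f)).
    simpl_coords; rewrite !Z2Nat.id by lia; lia.
Qed.

Lemma vadd_assoc (x y z : V) : vadd x (vadd y z) = vadd (vadd x y) z.
Proof. apply V_ext; simpl_coords; lia. Qed.

Lemma vadd_0r (x : V) : vadd x vzero = x.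
Proof. apply V_ext; simpl_coords; lia. Qed.

Lemma vadd_0l (x : V) : vadd vzero x = x.
Proof. apply V_ext; simpl_coords; lia. Qed.

Lemma vscale_0 (x : V) : vscale 0 x = vzero.
Proof. apply V_ext; simpl_coords; lia. Qed.

Lemma vscale_S (n : nat) (x : V) : vscale (S n) x = vadd (vscale n x) x.
Proof. apply V_ext; simpl_coords; lia. Qed.

Section Monoid.

Variable gs : list V.

Lemma InMonoid_vadd (x y : V) :
  InMonoid gs x -> InMonoid gs y -> InMonoid gs (vadd x y).
Proof.
  intros Hx Hy; induction Hy as [| y g _ IH Hg].
  - now rewrite vadd_0r.
  - rewrite vadd_assoc; now constructor.
Qed.

Lemma InMonoid_vscale (n : nat) (g : V) : In g gs -> InMonoid gs (vscale n g).
Proof.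
  intros Hg; induction n as [| n IH].
  - rewrite vscale_0; constructor.
  - rewrite vscale_S; now constructor.
Qed.

Lemma InMonoid_sub (P : V -> Prop) :
  P vzero -> (forall x y, P x -> P y -> P (vadd x y)) ->
  (forall g, In g gs -> P g) -> forall x, InMonoid gs x -> P x.
Proof. intros P0 Padd Pgs x Hx; induction Hx; auto. Qed.

End Monoid.

Lemma InMonoid_gens_iff (E : V) :
  InMonoid [D1; D2; D4; vadd D3 D7; vadd D5 D7; vadd D6 D7] E <->
  NDelta E /\ balanced E.
Proof.
  split.
  - apply (InMonoid_sub _ (fun x => NDelta x /\ balanced x)).
    + simpl_coords; lia.
    + intros x y Hx Hy; simpl_coords; lia.
    + intros g Hg; repeat destruct Hg as [<- | Hg]; try contradiction;
        simpl_coords; lia.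
  - intros [HE Hbal].
    assert (Hdecomp : E =
      vadd (vscale (Z.to_nat (c1 E)) D1) (vadd (vscale (Z.to_nat (c2 E)) D2)
      (vadd (vscale (Z.to_nat (c4 E)) D4)
      (vadd (vscale (Z.to_nat (c3 E)) (vadd D3 D7))
      (vadd (vscale (Z.to_nat (c5 E)) (vadd D5 D7))
            (vscale (Z.to_nat (c6 E)) (vadd D6 D7))))))).
    { apply V_ext; simpl_coords; rewrite ?Z2Nat.id by lia; lia. }
    rewrite Hdecomp.
    repeat apply InMonoid_vadd; apply InMonoid_vscale; cbn; tauto.
Qed.

Theorem mainTheorem15 :
  NDelta D4 /\ minuscule D4 /\
  (forall E : V,
     Gamma D4 E <->
     InMonoid [D1; D2; D4; vadd D3 D7; vadd D5 D7; vadd D6 D7] E).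
Proof.
  split; [simpl_coords; lia |].
  split; [exact minuscule_D4 |].
  intros E; rewrite Gamma_D4_iff, InMonoid_gens_iff; reflexivity.
Qed.
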